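(* Let $\{(\mathcal{X}_l,\mathring{\mathcal{X}}_l,p_l)\}_{l\in\mathcal{I}}$ be $B$-$B$-bimodules with specified projections with reduced free product $(\mathcal{X},\mathring{\mathcal{X}},p)$, and for each $l$ let $S_l\subset\mathcal{A}_{l,\mathcal{F}}\cup\mathcal{A}_{l,\mathcal{B}}$. Let $i\ne j$ in $\mathcal{I}$, let $A_1\in\mathcal{A}_i$ be a simple product of elements from $S_i$ and $A_2\in\mathcal{A}_j$ a simple product of elements from $S_j$. If $A_1$ is a Boolean product, then $A_1A_2(1_B)=A_1\big(\mathbb{E}_{\mathcal{L}(\mathcal{X})}(A_2)\big)$, where $\mathbb{E}_{\mathcal{L}(\mathcal{X})}(A_2)\in B\subset\mathcal{X}$.
   Context: $B$ is a unital complex algebra. A $B$-$B$-bimodule with specified projection is a triple $(\mathcal{X},\mathring{\mathcal{X}},p)$ with $\mathcal{X}=B\oplus\mathring{\mathcal{X}}$ a direct sum of $B$-$B$-bimodules and $p(b\oplus\eta)=b$; $\mathcal{L}(\mathcal{X})$ is the algebra of linear operators on $\mathcal{X}$ respecting the bimodule structure and $\mathbb{E}_{\mathcal{L}(\mathcal{X})}(T)=p(T(1_B\oplus0))$. The reduced free product is $\mathcal{X}=B\oplus\mathring{\mathcal{X}}$ with $\mathring{\mathcal{X}}=\bigoplus_{n\ge1}\bigoplus_{i_1\ne\cdots\ne i_n}\mathring{\mathcal{X}}_{i_1}\otimes_B\cdots\otimes_B\mathring{\mathcal{X}}_{i_n}$ (consecutive indices distinct), $p$ the projection onto $B$. For $l\in\mathcal{I}$,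 $\mathcal{X}(l)=B\oplus\bigoplus_{n\ge1}\bigoplus_{i_1\ne\cdots\ne i_n,\ i_1\ne l}\mathring{\mathcal{X}}_{i_1}\otimes_B\cdots\otimes_B\mathring{\mathcal{X}}_{i_n}$, $V_l:\mathcal{X}\to\mathcal{X}_l\otimes_B\mathcal{X}(l)$ is the natural isomorphism, $\lambda_l(a)=V_l^{-1}(a\otimes I)V_l$, $P_l$ the projection onto the summand $B\oplus\mathring{\mathcal{X}}_l$ (zero on other summands), $\mathcal{A}_{l,\mathcal{F}}=\lambda_l(\mathcal{L}(\mathcal{X}_l))$, $\mathcal{A}_{l,\mathcal{B}}=P_l\lambda_l(\mathcal{L}(\mathcal{X}_l))P_l$, $\mathcal{A}_l$ the algebra generated by both. A product $a_1\cdots a_m$ with all $a_k\in S_l$ is a simple product of elements from $S_l$; it is a Boolean product if some $a_k\in S_l\cap\mathcal{A}_{l,\mathcal{B}}$. *)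

From mathcomp Require Import all_boot all_algebra reals complex.
From Stdlib Require Import ClassicalEpsilon.
Set Implicit Arguments. Unset Strict Implicit. Unset Printing Implicit Defensive.
Import GRing.Theory.
Local Open Scope ring_scope.

(* The K-vector-space structure is the one induced by k |-> k%:A, and the    *)
(* left and right K-actions are required to agree (bimodule of K-algebras).  *)
Record bimod (K : fieldType) (B : algType K) := Bimod {
  bm_sort :> zmodType;
  bm_l : B -> bm_sort -> bm_sort;
  bm_r : bm_sort -> B -> bm_sort;
  bm_lD : forall b x y, bm_l b (x + y) = bm_l b x + bm_l b y;
  bm_Dl : forall b c x, bm_l (b + c) x = bm_l b x + bm_l c x;
  bm_lM : forall b c x, bm_l (b * c) x = bm_l b (bm_l c x);
  bm_l1 : forall x, bm_l 1 x = x;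
  bm_rD : forall b x y, bm_r (x + y) b = bm_r x b + bm_r y b;
  bm_Dr : forall b c x, bm_r x (b + c) = bm_r x b + bm_r x c;
  bm_rM : forall b c x, bm_r x (b * c) = bm_r (bm_r x b) c;
  bm_r1 : forall x, bm_r x 1 = x;
  bm_lr : forall b c x, bm_r (bm_l b x) c = bm_l b (bm_r x c);
  bm_scal : forall (k : K) x, bm_l (k%:A) x = bm_r x (k%:A)
}.

Section FreeProduct.
Variables (K : fieldType) (B : algType K) (I : Type) (Xo : I -> bimod B).

(* The bimodule with specified projection X_l = B (+) Xo_l, p_l = fst.      *)
Definition Xl (l : I) : Type := (B * Xo l)%type.
Definition Xl_l (l : I) (b : B) (x : Xl l) : Xl l := (b * x.1, bm_l b x.2).
Definition Xl_r (l : I) (x : Xl l) (b : B) : Xl l := (x.1 * b, bm_r x.2 b).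
Definition Xl_add (l : I) (x y : Xl l) : Xl l := (x.1 + y.1, x.2 + y.2).

Definition isLXl (l : I) (a : Xl l -> Xl l) : Prop :=
  [/\ forall x y, a (Xl_add x y) = Xl_add (a x) (a y),
      forall b x, a (Xl_l b x) = Xl_l b (a x)
    & forall b x, a (Xl_r x b) = Xl_r (a x) b].

(* The reduced free product, as B (+) (direct sum over nonempty alternating *)
(* words of X°_{i1} (x)_B ... (x)_B X°_{in}), realised as the quotient of   *)
(* formal finite sums of generators by the tensor-product relations.        *)
Definition letter : Type := {l : I & Xo l}.

Fixpoint alt (w : seq letter) : Prop :=
  match w with
  | x :: ((y :: _) as w') => projT1 x <> projT1 y /\ alt w'
  | _ => True
  end.

Definition word : Type := {w : seq letter | w <> [::] /\ alt w}.

(* generators: an element of B, or an elementary tensor xi_1 (x) ... (x) xi_n *)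
Definition gen : Type := (B + word)%type.

(* formal sums: concatenation is addition *)
Inductive feq : seq gen -> seq gen -> Prop :=
| feq_refl s : feq s s
| feq_sym s t : feq s t -> feq t s
| feq_trans s t u : feq s t -> feq t u -> feq s u
| feq_cat s1 s2 t1 t2 : feq s1 t1 -> feq s2 t2 -> feq (s1 ++ s2) (t1 ++ t2)
| feq_comm s t : feq (s ++ t) (t ++ s)
| feq_B0 : feq [:: inl 0] [::]
| feq_BD b1 b2 : feq [:: inl (b1 + b2)] [:: inl b1; inl b2]
| feq_W0 (w : word) u v l :
    sval w = u ++ existT _ l (0 : Xo l) :: v -> feq [:: inr w] [::]
| feq_WD (w w1 w2 : word) u v l (x1 x2 : Xo l) :
    sval w = u ++ existT _ l (x1 + x2) :: v ->
    sval w1 = u ++ existT _ l x1 :: v ->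
    sval w2 = u ++ existT _ l x2 :: v ->
    feq [:: inr w] [:: inr w1; inr w2]
| feq_Wbal (w w' : word) u v l l' (x : Xo l) (y : Xo l') (b : B) :
    sval w = u ++ existT _ l (bm_r x b) :: existT _ l' y :: v ->
    sval w' = u ++ existT _ l x :: existT _ l' (bm_l b y) :: v ->
    feq [:: inr w] [:: inr w'].

Definition X : Type := {c : seq gen -> Prop | exists s, c = feq s}.

Definition cls (s : seq gen) : X := exist _ (feq s) (ex_intro _ s erefl).

Definition repr (x : X) : seq gen :=
  proj1_sig (constructive_indefinite_description _ (proj2_sig x)).

(* operator on X induced by a map on formal sums (well defined whenever the *)
(* map respects feq, which is the case for all operators below)             *)
Definition lift (f : seq gen -> seq gen) (x : X) : X := cls (f (repr x)).

Definition ext (g : gen -> seq gen) (s : seq gen) : seq gen := flatten (map g s).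

(* the generator of a list of letters (zero if it is not an alternating word) *)
Definition mkw (s : seq letter) : seq gen :=
  match excluded_middle_informative (s <> [::] /\ alt s) with
  | left h => [:: inr (exist _ s h)]
  | right _ => [::]
  end.

Definition embB (b : B) : X := cls [:: inl b].
Definition pB_gen (g : gen) : B := match g with inl b => b | inr _ => 0 end.
Definition p (x : X) : B := \sum_(g <- repr x) pB_gen g.

Definition EL (T : X -> X) : B := p (T (embB 1)).

Definition as_l (l : I) (x : letter) : option (Xo l) :=
  match excluded_middle_informative (projT1 x = l) with
  | left e => Some (eq_rect _ (fun k => bm_sort (Xo k)) (projT2 x) _ e)
  | right _ => None
  end.

Definition lact_letter (b : B) (x : letter) : letter :=
  existT _ (projT1 x) (bm_l b (projT2 x)).

(* c . eta  for eta in X(l) given as a (possibly empty = 1_B) list of letters *)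
Definition lact_w (c : B) (rest : seq letter) : seq gen :=
  match rest with
  | [::] => [:: inl c]
  | y :: r => mkw (lact_letter c y :: r)
  end.

(* lambda_l(a) = V_l^{-1} (a (x) I) V_l, computed on generators:            *)
(*  - b in B        : V_l b = (1,0) (x) b                                   *)
(*  - word not starting with l : V_l w = (1,0) (x) w                        *)
(*  - word xi :: rest starting with l : V_l w = (0,xi) (x) rest             *)
(* and (c, zeta) (x) eta = c . eta  (+)  zeta (x) eta.                      *)
Definition lam_gen (l : I) (a : Xl l -> Xl l) (g : gen) : seq gen :=
  match g with
  | inl b =>
      let: (c, z) := a (1, 0) in
      [:: inl (c * b)] ++ mkw [:: existT _ l (bm_r z b)]
  | inr w =>
      match sval w with
      | [::] => [::]
      | x :: rest =>
          match as_l l x with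
          | Some xi =>
              let: (c, z) := a (0, xi) in
              lact_w c rest ++ mkw (existT _ l z :: rest)
          | None =>
              let: (c, z) := a (1, 0) in
              mkw (lact_letter c x :: rest) ++ mkw (existT _ l z :: x :: rest)
          end
      end
  end.

Definition lam (l : I) (a : Xl l -> Xl l) : X -> X := lift (ext (lam_gen a)).

Definition P_gen (l : I) (g : gen) : seq gen :=
  match g with
  | inl b => [:: inl b]
  | inr w =>
      match sval w with
      | [:: x] => if as_l l x is Some _ then [:: g] else [::]
      | _ => [::]
      end
  end.

Definition P (l : I) : X -> X := lift (ext (P_gen l)).

Definition in_AF (l : I) (T : X -> X) : Prop :=
  exists a : Xl l -> Xl l, isLXl a /\ T = lam a.
Definition in_AB (l : I) (T : X -> X) : Prop :=
  exists a : Xl l -> Xl l, isLXl a /\ T = P l \o lam a \o P l.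

(* products a_1 ... a_m of operators (composition, a_m applied first) *)
Definition prodops (ops : seq (X -> X)) : X -> X := foldr (fun f g => f \o g) id ops.

Definition simple_prod (S : (X -> X) -> Prop) (A : X -> X) : Prop :=
  exists ops : seq (X -> X),
    [/\ ops <> [::], forall a, List.In a ops -> S a & A = prodops ops].

Definition boolean_prod (l : I) (S : (X -> X) -> Prop) (A : X -> X) : Prop :=
  exists ops : seq (X -> X),
    [/\ ops <> [::], forall a, List.In a ops -> S a,
        exists2 a, List.In a ops & S a /\ in_AB l a
      & A = prodops ops].

End FreeProduct.

From Pilot Require Import Defs.
From mathcomp Require Import all_boot all_algebra reals complex.
From Stdlib Require Import ClassicalEpsilon ProofIrrelevance FunctionalExtensionality PropExtensionality.
From Stdlib Require List.
Set Implicit Arguments. Unset Strict Implicit. Unset Printing Implicit Defensive.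
Import GRing.Theory.
Local Open Scope ring_scope.

(** Every operator of [A_l] is induced by a map [g] on the generators of the
formal sums (it acts on an elementary tensor through its first letter).  For [l = j] the summand
[B (+) X°_j] is invariant, hence [A_2 (1_B) = E(A_2) + eta] with [eta] a sum of
one-letter [j]-words.  For [l = i] the span of the words that are not one-letter
[i]-words is invariant, and [P_i] kills it; since [i <> j] it contains [eta], so
the Boolean product [A_1] annihilates [eta]. *)

Section FreeProductOperators.
Variables (K : fieldType) (B : algType K) (I : Type) (Xo : I -> bimod B).

Local Notation gen := (gen Xo).
Local Notation letter := (letter Xo).
Local Notation word := (word Xo).
Local Notation X := (X Xo).
Local Notation feq := (@feq K B I Xo).
Local Notation pB_gen := (@pB_gen K B I Xo).

Lemma bm_0l l (x : Xo l) : bm_l 0 x = 0.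
Proof. by apply: (addrI (bm_l 0 x)); rewrite -bm_Dl !addr0. Qed.

Lemma bm_l0 l (b : B) : bm_l b (0 : Xo l) = 0.
Proof. by apply: (addrI (bm_l b 0)); rewrite -bm_lD !addr0. Qed.

Lemma bm_r0 l (x : Xo l) : bm_r x 0 = 0.
Proof. by apply: (addrI (bm_r x 0)); rewrite -bm_Dr !addr0. Qed.

Lemma feq_catACA (s1 s2 t1 t2 : seq gen) :
  feq ((s1 ++ s2) ++ (t1 ++ t2)) ((s1 ++ t1) ++ (s2 ++ t2)).
Proof.
rewrite -!catA; apply: feq_cat; first exact: feq_refl.
by rewrite !catA; apply: feq_cat; [exact: feq_comm | exact: feq_refl].
Qed.

Lemma cls_eq s t : feq s t -> cls s = cls t.
Proof.
move=> st; rewrite /cls.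
have E : feq s = feq t.
  apply: functional_extensionality => u; apply: propositional_extensionality.
  by split => h; [exact: feq_trans (feq_sym st) h | exact: feq_trans st h].
move: (ex_intro _ s _) (ex_intro _ t _); rewrite E => p1 p2.
by rewrite (proof_irrelevance _ p1 p2).
Qed.

Lemma repr_cls s : feq (Defs.repr (cls s)) s.
Proof.
rewrite /Defs.repr; case: (constructive_indefinite_description _ _) => t /= ht.
by rewrite -ht; exact: feq_refl.
Qed.

Definition feq_compat (f : seq gen -> seq gen) :=
  forall s t, feq s t -> feq (f s) (f t).

Lemma ext_cons (g : gen -> seq gen) x s : ext g (x :: s) = g x ++ ext g s.
Proof. by []. Qed.

Lemma ext_cat (g : gen -> seq gen) s t : ext g (s ++ t) = ext g s ++ ext g t.
Proof. by rewrite /ext map_cat flatten_cat. Qed.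

Lemma ext_comp (g1 g2 : gen -> seq gen) s :
  ext g1 (ext g2 s) = ext (ext g1 \o g2) s.
Proof. by elim: s => // x s IH; rewrite !ext_cons ext_cat IH. Qed.

Lemma ext_compat (g : gen -> seq gen) :
  feq (g (inl 0)) [::] ->
  (forall b1 b2, feq (g (inl (b1 + b2))) (g (inl b1) ++ g (inl b2))) ->
  (forall (w : word) u v l, sval w = u ++ existT _ l (0 : Xo l) :: v ->
     feq (g (inr w)) [::]) ->
  (forall (w w1 w2 : word) u v l (x1 x2 : Xo l),
    sval w = u ++ existT _ l (x1 + x2) :: v ->
    sval w1 = u ++ existT _ l x1 :: v ->
    sval w2 = u ++ existT _ l x2 :: v ->
    feq (g (inr w)) (g (inr w1) ++ g (inr w2))) ->
  (forall (w w' : word) u v l l' (x : Xo l) (y : Xo l') (b : B),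
    sval w = u ++ existT _ l (bm_r x b) :: existT _ l' y :: v ->
    sval w' = u ++ existT _ l x :: existT _ l' (bm_l b y) :: v ->
    feq (g (inr w)) (g (inr w'))) ->
  feq_compat (ext g).
Proof.
move=> g0 gD gW0 gWD gWbal s t; elim: s t /.
- by move=> s; exact: feq_refl.
- by move=> s t _; apply: feq_sym.
- by move=> s t u _ h1 _ h2; apply: feq_trans h1 h2.
- by move=> s1 s2 t1 t2 _ h1 _ h2; rewrite !ext_cat; apply: feq_cat.
- by move=> s t; rewrite !ext_cat; apply: feq_comm.
- by rewrite /ext /= cats0.
- by move=> b1 b2; rewrite /ext /= !cats0.
- by move=> w u v l e; rewrite /ext /= cats0; apply: gW0 e.
- by move=> w w1 w2 u v l x1 x2 e e1 e2; rewrite /ext /= !cats0; apply: gWD e e1 e2.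
- by move=> w w' u v l l' x y b e e'; rewrite /ext /= !cats0; apply: gWbal e e'.
Qed.

Lemma sum_pB_feq s t : feq s t -> \sum_(g <- s) pB_gen g = \sum_(g <- t) pB_gen g.
Proof.
elim: s t /.
- by [].
- by move=> s t _ ->.
- by move=> s t u _ -> _ ->.
- by move=> s1 s2 t1 t2 _ h1 _ h2; rewrite !big_cat h1 h2.
- by move=> s t; rewrite !big_cat [X in X = _]addrC.
- by rewrite big_seq1 big_nil.
- by move=> b1 b2; rewrite !big_cons big_nil /= !addr0.
- by move=> *; rewrite big_seq1 big_nil.
- by move=> *; rewrite !big_cons big_nil /= !addr0.
- by move=> *; rewrite !big_seq1.
Qed.

Lemma p_cls s : p (cls s) = \sum_(g <- s) pB_gen g.
Proof. exact: sum_pB_feq (repr_cls s). Qed.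

Definition is_word_gen (g : gen) : bool := if g is inr _ then true else false.

Lemma feq_split_B s :
  feq s (inl (\sum_(g <- s) pB_gen g) :: filter is_word_gen s).
Proof.
elim: s => [|[b|w] s IH]; rewrite ?big_nil ?big_cons /=.
- exact: feq_sym (feq_B0 Xo).
- apply: feq_sym; apply: (feq_trans (feq_cat (feq_BD Xo b _) (feq_refl _))).
  exact: (feq_cat (s1 := [:: inl b]) (feq_refl _) (feq_sym IH)).
- rewrite add0r; apply: (feq_trans (feq_cat (s1 := [:: inr w]) (feq_refl _) IH)).
  exact: (feq_cat (s1 := [:: inr w; _]) (feq_comm [:: inr w] [:: _]) (feq_refl _)).
Qed.

(** * Elementary tensors *)

Lemma alt_eq_indices (s1 s2 : seq letter) :
  map (@projT1 I _) s1 = map (@projT1 I _) s2 -> alt s1 -> alt s2.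
Proof.
elim: s1 s2 => [|x s1 IH] [|y s2] //= [e1 e2].
case: s1 s2 IH e2 => [|x' s1] [|y' s2] //= IH [e3 e4] [h1 h2].
split; first by rewrite -e1 -e3.
by apply: (IH (y' :: s2)) => //=; rewrite e3 e4.
Qed.

Lemma mkwP (s : seq letter) :
  mkw s = [::] \/ exists w : word, mkw s = [:: inr w] /\ sval w = s.
Proof.
rewrite /mkw; case: excluded_middle_informative => h; last by left.
by right; exists (exist _ s h).
Qed.

Lemma mkw_eq_indices (s1 s2 : seq letter) :
  map (@projT1 I _) s1 = map (@projT1 I _) s2 ->
  (mkw s1 = [::] /\ mkw s2 = [::]) \/
  exists w1 w2 : word, [/\ mkw s1 = [:: inr w1], mkw s2 = [:: inr w2],
     sval w1 = s1 & sval w2 = s2].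
Proof.
move=> e; rewrite /mkw.
case: excluded_middle_informative => h1; case: excluded_middle_informative => h2.
- by right; exists (exist _ s1 h1), (exist _ s2 h2).
- case: h2; case: h1 => n1 a1; split; last exact: alt_eq_indices e a1.
  by move=> z; subst s2; move: e n1; case: (s1).
- case: h1; case: h2 => n2 a2; split; last exact: alt_eq_indices (esym e) a2.
  by move=> z; subst s1; move: e n2; case: (s2).
- by left.
Qed.

Lemma feq_mkw0 (u v : seq letter) l : feq (mkw (u ++ existT _ l (0 : Xo l) :: v)) [::].
Proof.
rewrite /mkw; case: excluded_middle_informative => h; last exact: feq_refl.
exact: (@feq_W0 _ _ _ _ (exist _ _ h) u v l erefl).
Qed.

Lemma feq_mkwD (u v : seq letter) l (x1 x2 : Xo l) :
  feq (mkw (u ++ existT _ l (x1 + x2) :: v))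
      (mkw (u ++ existT _ l x1 :: v) ++ mkw (u ++ existT _ l x2 :: v)).
Proof.
have m1 : map (@projT1 I _) (u ++ existT _ l (x1 + x2) :: v) =
          map (@projT1 I _) (u ++ existT _ l x1 :: v) by rewrite !map_cat.
have m2 : map (@projT1 I _) (u ++ existT _ l (x1 + x2) :: v) =
          map (@projT1 I _) (u ++ existT _ l x2 :: v) by rewrite !map_cat.
case: (mkw_eq_indices m1) => [[E E1]|[w [w1 [E E1 e e1]]]];
  case: (mkw_eq_indices m2) => [[E' E2]|[w' [w2 [E' E2 e' e2]]]];
  rewrite E E1 E2 //; rewrite E' in E; try discriminate; first exact: feq_refl.
by case: E => <-; exact: feq_WD e' e1 e2.
Qed.

Lemma feq_mkw_bal (u v : seq letter) l l' (x : Xo l) (y : Xo l') (b : B) :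
  feq (mkw (u ++ existT _ l (bm_r x b) :: existT _ l' y :: v))
      (mkw (u ++ existT _ l x :: existT _ l' (bm_l b y) :: v)).
Proof.
have m : map (@projT1 I _) (u ++ existT _ l (bm_r x b) :: existT _ l' y :: v) =
         map (@projT1 I _) (u ++ existT _ l x :: existT _ l' (bm_l b y) :: v)
  by rewrite !map_cat.
case: (mkw_eq_indices m) => [[-> ->]|[w [w' [-> -> e e']]]]; first exact: feq_refl.
exact: feq_Wbal e e'.
Qed.

Lemma as_l_eq l (x : Xo l) : as_l l (existT _ l x) = Some x.
Proof.
rewrite /as_l; case: excluded_middle_informative => e /=; last by case: e.
by rewrite (proof_irrelevance _ e erefl).
Qed.

Lemma as_l_neq l l' (x : Xo l') : l' <> l -> as_l l (existT _ l' x) = None.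
Proof. by move=> ne; rewrite /as_l; case: excluded_middle_informative. Qed.

Lemma as_l_Some l (y : letter) xi : as_l l y = Some xi -> y = existT _ l xi.
Proof.
rewrite /as_l; case: excluded_middle_informative => // e [<-].
by case: y e => l' y' /= e; subst l.
Qed.

Lemma feq_lact_w0 (c : B) (u v : seq letter) l :
  feq (lact_w c (u ++ existT _ l (0 : Xo l) :: v)) [::].
Proof.
case: u => [|y u] /=; last exact: (feq_mkw0 (lact_letter c y :: u)).
by rewrite /lact_letter /= bm_l0; exact: (feq_mkw0 [::]).
Qed.

Lemma feq_lact_wD (c : B) (u v : seq letter) l (x1 x2 : Xo l) :
  feq (lact_w c (u ++ existT _ l (x1 + x2) :: v))
      (lact_w c (u ++ existT _ l x1 :: v) ++ lact_w c (u ++ existT _ l x2 :: v)).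
Proof.
case: u => [|y u] /=; last exact: (feq_mkwD (lact_letter c y :: u)).
by rewrite /lact_letter /= bm_lD; exact: (feq_mkwD [::]).
Qed.

Lemma feq_lact_w_bal (c : B) (u v : seq letter) l l' (x : Xo l) (y : Xo l') (b : B) :
  feq (lact_w c (u ++ existT _ l (bm_r x b) :: existT _ l' y :: v))
      (lact_w c (u ++ existT _ l x :: existT _ l' (bm_l b y) :: v)).
Proof.
case: u => [|y' u] /=; last exact: (feq_mkw_bal (lact_letter c y' :: u)).
by rewrite /lact_letter /= -bm_lr; exact: (feq_mkw_bal [::]).
Qed.

Lemma feq_lact_wDl (c1 c2 : B) (v : seq letter) :
  feq (lact_w (c1 + c2) v) (lact_w c1 v ++ lact_w c2 v).
Proof.
case: v => [|y v] /=; first exact: feq_BD.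
by rewrite /lact_letter /= bm_Dl; exact: (feq_mkwD [::]).
Qed.

Section Lambda.
Variables (l : I) (a : Xl Xo l -> Xl Xo l).

Definition lamw (s : seq letter) : seq gen :=
  match s with
  | [::] => [::]
  | x :: rest =>
      match as_l l x with
      | Some xi =>
          let: (c, z) := a (0, xi) in
          lact_w c rest ++ mkw (existT _ l z :: rest)
      | None =>
          let: (c, z) := a (1, 0) in
          mkw (lact_letter c x :: rest) ++ mkw (existT _ l z :: x :: rest)
      end
  end.

Lemma lam_gen_inr (w : word) : lam_gen a (inr w) = lamw (sval w).
Proof. by []. Qed.

Hypothesis ha : isLXl a.

Lemma isLXl_00 : a (0, 0) = (0, 0).
Proof.
case: ha => aD _ _; move: (aD (0, 0) (0, 0)); rewrite /Xl_add /= !addr0.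
case: (a (0, 0)) => c z /= [hc hz].
by congr pair; [apply: (addrI c) | apply: (addrI z)]; rewrite addr0.
Qed.

Lemma isLXl_0D (x1 x2 : Xo l) : a (0, x1 + x2) =
  ((a (0, x1)).1 + (a (0, x2)).1, (a (0, x1)).2 + (a (0, x2)).2).
Proof. by case: ha => aD _ _; move: (aD (0, x1) (0, x2)); rewrite /Xl_add /= addr0. Qed.

Lemma isLXl_0r (x : Xo l) (b : B) :
  a (0, bm_r x b) = ((a (0, x)).1 * b, bm_r (a (0, x)).2 b).
Proof. by case: ha => _ _ ar; move: (ar b (0, x)); rewrite /Xl_r /= mul0r. Qed.

Lemma feq_lamw0 (u v : seq letter) l0 :
  feq (lamw (u ++ existT _ l0 (0 : Xo l0) :: v)) [::].
Proof.
case: u => [|y u] /=.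
- case: (classic (l0 = l)) => [e|ne].
  + subst l0; rewrite as_l_eq isLXl_00.
    apply: (feq_cat (t1 := [::]) (t2 := [::])); last exact: (feq_mkw0 [::]).
    case: v => [|y v] /=; first exact: feq_B0.
    by rewrite /lact_letter /= bm_0l; exact: (feq_mkw0 [::]).
  + rewrite as_l_neq //; case: (a (1, 0)) => c z.
    apply: (feq_cat (t1 := [::]) (t2 := [::])); last exact: (feq_mkw0 [:: _]).
    by rewrite /lact_letter /= bm_l0; exact: (feq_mkw0 [::]).
- case: (as_l l y) => [xi|]; [case: (a (0, xi)) | case: (a (1, 0))] => c z;
    apply: (feq_cat (t1 := [::]) (t2 := [::])).
  + exact: feq_lact_w0.
  + exact: (feq_mkw0 (_ :: u)).
  + exact: (feq_mkw0 (_ :: u)).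
  + exact: (feq_mkw0 (_ :: _ :: u)).
Qed.

Lemma feq_lamwD (u v : seq letter) l0 (x1 x2 : Xo l0) :
  feq (lamw (u ++ existT _ l0 (x1 + x2) :: v))
      (lamw (u ++ existT _ l0 x1 :: v) ++ lamw (u ++ existT _ l0 x2 :: v)).
Proof.
case: u => [|y u] /=.
- case: (classic (l0 = l)) => [e|ne].
  + subst l0; rewrite !as_l_eq isLXl_0D.
    case: (a (0, x1)) => c1 z1; case: (a (0, x2)) => c2 z2 /=.
    apply: feq_trans (feq_catACA _ _ _ _).
    by apply: feq_cat; [exact: feq_lact_wDl | exact: (feq_mkwD [::])].
  + rewrite !as_l_neq //; case: (a (1, 0)) => c z.
    apply: feq_trans (feq_catACA _ _ _ _).
    apply: feq_cat; last exact: (feq_mkwD [:: _]).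
    by rewrite /lact_letter /= bm_lD; exact: (feq_mkwD [::]).
- case: (as_l l y) => [xi|]; [case: (a (0, xi)) | case: (a (1, 0))] => c z;
    apply: feq_trans (feq_catACA _ _ _ _); apply: feq_cat.
  + exact: feq_lact_wD.
  + exact: (feq_mkwD (_ :: u)).
  + exact: (feq_mkwD (_ :: u)).
  + exact: (feq_mkwD (_ :: _ :: u)).
Qed.

Lemma feq_lamw_bal (u v : seq letter) l0 l1 (x : Xo l0) (y : Xo l1) (b : B) :
  feq (lamw (u ++ existT _ l0 (bm_r x b) :: existT _ l1 y :: v))
      (lamw (u ++ existT _ l0 x :: existT _ l1 (bm_l b y) :: v)).
Proof.
case: u => [|y' u] /=.
- case: (classic (l0 = l)) => [e|ne].
  + subst l0; rewrite !as_l_eq isLXl_0r; case: (a (0, x)) => c z /=.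
    apply: feq_cat; last exact: (feq_mkw_bal [::]).
    by rewrite /lact_letter /= bm_lM; exact: feq_refl.
  + rewrite !as_l_neq //; case: (a (1, 0)) => c z.
    apply: feq_cat; last exact: (feq_mkw_bal [:: _]).
    by rewrite /lact_letter /= -bm_lr; exact: (feq_mkw_bal [::]).
- case: (as_l l y') => [xi|]; [case: (a (0, xi)) | case: (a (1, 0))] => c z;
    apply: feq_cat.
  + exact: feq_lact_w_bal.
  + exact: (feq_mkw_bal (_ :: u)).
  + exact: (feq_mkw_bal (_ :: u)).
  + exact: (feq_mkw_bal (_ :: _ :: u)).
Qed.

Lemma lam_gen_compat : feq_compat (ext (lam_gen a)).
Proof.
apply: ext_compat.
- rewrite /lam_gen; case: (a (1, 0)) => c z; rewrite mulr0 bm_r0.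
  apply: (feq_cat (t1 := [::]) (t2 := [::])); first exact: feq_B0.
  exact: (feq_mkw0 [::] [::]).
- move=> b1 b2; rewrite /lam_gen; case: (a (1, 0)) => c z; rewrite mulrDr bm_Dr.
  apply: feq_trans (feq_catACA _ _ _ _).
  by apply: feq_cat; [exact: feq_BD | exact: (feq_mkwD [::] [::])].
- by move=> w u v l0 e; rewrite lam_gen_inr e; apply: feq_lamw0.
- by move=> w w1 w2 u v l0 x1 x2 e e1 e2; rewrite !lam_gen_inr e e1 e2; apply: feq_lamwD.
- by move=> w w' u v l0 l1 x y b e e'; rewrite !lam_gen_inr e e'; apply: feq_lamw_bal.
Qed.

End Lambda.

Lemma P_genP l (g : gen) : P_gen l g = [:: g] \/ P_gen l g = [::].
Proof.
case: g => [b|w] /=; first by left.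
case: (sval w) => [|x [|y r]]; try by right.
by case: (as_l l x); [left | right].
Qed.

Lemma P_gen_compat l : feq_compat (ext (P_gen l)).
Proof.
apply: ext_compat.
- exact: feq_B0.
- by move=> b1 b2; exact: feq_BD.
- move=> w u v l0 e; case: (P_genP l (inr w)) => ->; last exact: feq_refl.
  exact: feq_W0 e.
- move=> w w1 w2 u v l0 x1 x2 e e1 e2; have hW := feq_WD e e1 e2.
  rewrite /P_gen e e1 e2.
  case: u {e e1 e2} => [|y [|y2 u]] /=; try exact: feq_refl.
  case: v {hW} (hW) => [|y v] hW /=; try exact: feq_refl.
  case: (classic (l0 = l)) => [e|ne]; last by rewrite !as_l_neq //; exact: feq_refl.
  by subst l0; rewrite !as_l_eq.
- move=> w w' u v l0 l1 x y b e e'; rewrite /P_gen e e'.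
  by case: u {e e'} => [|y0 [|y2 u]] /=; exact: feq_refl.
Qed.

(** * Operators induced by maps on generators *)

Definition induced (T : X -> X) (g : gen -> seq gen) :=
  forall s, T (cls s) = cls (ext g s).

Lemma induced_lift (g : gen -> seq gen) :
  feq_compat (ext g) -> induced (Defs.lift (ext g)) g.
Proof. by move=> hg s; apply: cls_eq; apply: hg; exact: repr_cls. Qed.

Lemma induced_comp T1 T2 g1 g2 :
  induced T1 g1 -> induced T2 g2 -> induced (T1 \o T2) (ext g1 \o g2).
Proof. by move=> h1 h2 s /=; rewrite h2 h1 ext_comp. Qed.

Lemma induced_id : induced id (fun x => [:: x]).
Proof. by move=> s; rewrite /ext flatten_seq1. Qed.

Definition gen_pres (Q : gen -> Prop) (g : gen -> seq gen) :=
  forall x, Q x -> List.Forall Q (g x).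

Lemma Forall_cat (Q : gen -> Prop) s t :
  List.Forall Q s -> List.Forall Q t -> List.Forall Q (s ++ t).
Proof. by move=> hs ht; apply/List.Forall_app. Qed.

Lemma ext_pres Q g s : gen_pres Q g -> List.Forall Q s -> List.Forall Q (ext g s).
Proof.
move=> hg; elim=> [|x {}s hx _ IH]; first exact: List.Forall_nil.
by rewrite ext_cons; apply: Forall_cat (hg x hx) IH.
Qed.

Lemma ext_kill (Q : gen -> Prop) g s :
  (forall x, Q x -> g x = [::]) -> List.Forall Q s -> ext g s = [::].
Proof. by move=> hg; elim=> // x {}s hx _ IH; rewrite ext_cons hg. Qed.

Lemma gen_pres_comp Q g1 g2 : gen_pres Q g1 -> gen_pres Q g2 -> gen_pres Q (ext g1 \o g2).
Proof. by move=> h1 h2 x hx; apply: ext_pres (h2 x hx). Qed.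

Lemma gen_pres_P l Q : gen_pres Q (P_gen l).
Proof. by move=> x hx; case: (P_genP l x) => ->; constructor. Qed.

Lemma AB_induced l (a : Xl Xo l -> Xl Xo l) : isLXl a ->
  induced (P l \o lam a \o P l) (ext (ext (P_gen l) \o lam_gen a) \o P_gen l).
Proof.
move=> ha; apply: induced_comp; last exact: induced_lift (P_gen_compat l).
apply: induced_comp; first exact: induced_lift (P_gen_compat l).
exact: induced_lift (lam_gen_compat ha).
Qed.

Lemma A_induced_pres l Q T :
  (forall a : Xl Xo l -> Xl Xo l, gen_pres Q (lam_gen a)) ->
  in_AF l T \/ in_AB l T -> exists g, induced T g /\ gen_pres Q g.
Proof.
move=> hQ [[a [ha ->]]|[a [ha ->]]].
- by exists (lam_gen a); split; [exact: induced_lift (lam_gen_compat ha) | exact: hQ].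
- eexists; split; first exact: AB_induced ha.
  by do 2?apply: gen_pres_comp; [exact: gen_pres_P | exact: hQ | exact: gen_pres_P].
Qed.

Lemma prodops_induced_pres Q (ops : seq (X -> X)) :
  (forall T, List.In T ops -> exists g, induced T g /\ gen_pres Q g) ->
  exists g, induced (prodops ops) g /\ gen_pres Q g.
Proof.
elim: ops => [|T ops IH] hops.
  by exists (fun x => [:: x]); split; [exact: induced_id | move=> x hx; constructor].
have [gT [hT pT]] := hops T (or_introl erefl).
have [g [hg pg]] := IH (fun T' hT' => hops T' (or_intror hT')).
by exists (ext gT \o g); split; [exact: induced_comp | exact: gen_pres_comp].
Qed.

Lemma simple_prod_induced_pres l Q (S : (X -> X) -> Prop) A :
  (forall T, S T -> in_AF l T \/ in_AB l T) ->
  (forall a : Xl Xo l -> Xl Xo l, gen_pres Q (lam_gen a)) ->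
  simple_prod S A -> exists g, induced A g /\ gen_pres Q g.
Proof.
move=> hS hQ [ops [_ hops ->]]; apply: prodops_induced_pres => T hT.
exact: A_induced_pres hQ (hS T (hops T hT)).
Qed.

(** * Invariant summands *)

Definition in_Xl_gen l (g : gen) : Prop :=
  if g is inr w then exists x, sval w = [:: x] /\ projT1 x = l else True.

Definition off_Xl_word l (s : seq letter) : Prop :=
  if s is [:: x] then projT1 x <> l else True.

Definition off_Xl_gen l (g : gen) : Prop :=
  if g is inr w then off_Xl_word l (sval w) else False.

Lemma mkw1_in_Xl l (x : letter) : projT1 x = l -> List.Forall (in_Xl_gen l) (mkw [:: x]).
Proof. by move=> hx; case: (mkwP [:: x]) => [->|[w [-> e]]]; do ?constructor; exists x. Qed.

Lemma lam_gen_in_Xl l (a : Xl Xo l -> Xl Xo l) : gen_pres (in_Xl_gen l) (lam_gen a).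
Proof.
case=> [b|w] /=.
- by move=> _; case: (a (1, 0)) => c z /=; constructor => //; exact: mkw1_in_Xl.
- case=> x [e hx]; rewrite e; case: x e hx => l' y /= e hx; subst l'.
  by rewrite as_l_eq; case: (a (0, y)) => c z /=; constructor => //; exact: mkw1_in_Xl.
Qed.

Lemma mkw_off_Xl l s : off_Xl_word l s -> List.Forall (off_Xl_gen l) (mkw s).
Proof. by move=> h; case: (mkwP s) => [->|[w [-> e]]]; do ?constructor; rewrite /= e. Qed.

Lemma lam_gen_off_Xl l (a : Xl Xo l -> Xl Xo l) : gen_pres (off_Xl_gen l) (lam_gen a).
Proof.
move=> [//|w]; rewrite lam_gen_inr.
case: w => -[//|x rest] [_ alt_w] /=.
case E: (as_l l x) => [xi|] off_w.
- have ex := as_l_Some E.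
  case: rest alt_w off_w => [_|y r [xy _] _]; first by rewrite ex => /(_ erefl).
  rewrite ex /= in xy.
  case: (a (0, xi)) => c z; apply: Forall_cat; apply: mkw_off_Xl => //.
  by case: r => //= e; apply: xy.
- by case: (a (1, 0)) => c z; apply: Forall_cat; apply: mkw_off_Xl.
Qed.

Lemma P_gen_off_Xl l x : off_Xl_gen l x -> P_gen l x = [::].
Proof.
case: x => [//|w] /=; case: (sval w) => [|[l' y] [|? ?]] //= ne.
by rewrite as_l_neq.
Qed.

Lemma AB_induced_kill l T :
  in_AB l T -> exists g, induced T g /\ forall x, off_Xl_gen l x -> g x = [::].
Proof.
case=> a [ha ->]; eexists; split; first exact: AB_induced ha.
by move=> x hx /=; rewrite P_gen_off_Xl.
Qed.

Lemma prodops_cat (ops1 ops2 : seq (X -> X)) :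
  prodops (ops1 ++ ops2) = prodops ops1 \o prodops ops2.
Proof. by elim: ops1 => //= T ops1 ->. Qed.

Lemma boolean_prod_induced_kill l (S : (X -> X) -> Prop) A :
  (forall T, S T -> in_AF l T \/ in_AB l T) ->
  boolean_prod l S A -> exists g, induced A g /\ forall x, off_Xl_gen l x -> g x = [::].
Proof.
move=> hS [ops [_ hops [T inT [_ ABT]] ->]].
have [ops1 [ops2 E]] := List.in_split _ _ inT; subst ops.
have A_off T' : List.In T' ops1 \/ List.In T' ops2 ->
    exists g, induced T' g /\ gen_pres (off_Xl_gen l) g.
  move=> h; apply: A_induced_pres (@lam_gen_off_Xl l) (hS _ (hops _ _)).
  by apply: List.in_or_app; case: h; [left | right; right].
have [g1 [h1 _]] := prodops_induced_pres (fun T' h => A_off T' (or_introl h)).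
have [g2 [h2 p2]] := prodops_induced_pres (fun T' h => A_off T' (or_intror h)).
have [gT [hT kT]] := AB_induced_kill ABT.
exists (ext g1 \o (ext gT \o g2)); split.
- by rewrite prodops_cat; apply: induced_comp h1 (induced_comp hT h2).
- by move=> x hx /=; rewrite (ext_kill kT (p2 x hx)).
Qed.

Lemma words_in_Xl_off_Xl i j s : i <> j ->
  List.Forall (in_Xl_gen j) s -> List.Forall (off_Xl_gen i) (filter is_word_gen s).
Proof.
move=> ij; elim=> [|[b|w] {}s hx _ IH] //=.
constructor => //; case: hx => -[l' y] [e /= hl]; subst l'.
by rewrite /off_Xl_gen e; exact: nesym.
Qed.

End FreeProductOperators.

Theorem lemma6p3 (R : realType) (B : algType R[i]) (I : Type)
  (Xo : I -> bimod B)
  (S : I -> (X Xo -> X Xo) -> Prop)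
  (hS : forall (l : I) (T : X Xo -> X Xo), S l T -> in_AF l T \/ in_AB l T)
  (i j : I) (hij : i <> j) (A1 A2 : X Xo -> X Xo)
  (hA1 : simple_prod (S i) A1) (hA2 : simple_prod (S j) A2)
  (hbool : boolean_prod i (S i) A1) :
  A1 (A2 (embB Xo 1)) = A1 (embB Xo (EL A2)).
Proof.
have [g2 [A2E g2_in_Xj]] := simple_prod_induced_pres (hS j) (@lam_gen_in_Xl _ _ _ Xo j) hA2.
have [g1 [A1E g1_kills]] := boolean_prod_induced_kill (hS i) hbool.
set s := ext g2 [:: inl 1].
have s_in_Xj : List.Forall (in_Xl_gen j) s.
  by apply: ext_pres g2_in_Xj _; constructor.
rewrite /EL /embB A2E p_cls -/s (cls_eq (feq_split_B s)) !A1E !ext_cons.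
by rewrite (ext_kill g1_kills (words_in_Xl_off_Xl hij s_in_Xj)).
Qed.
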